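(* Let $D$ be a demicap in $AG(4,3)$ with anchor point $a$. Then among the $71$ points of $AG(4,3)\setminus D$: the anchor point $a$ completes exactly five lines with pairs of points of $D$; exactly $40$ points complete exactly one line with a pair of points of $D$; and the remaining $30$ points complete no line with a pair of points of $D$.
   Context: $AG(4,3)$ is the affine space $\mathbb{F}_3^4$; a line is a set of three distinct points $\{x,y,z\}$ with $x+y+z=0$. A cap is a set of points containing no line. A hyperplane is a $3$-dimensional affine subspace of $\mathbb{F}_3^4$; a set of points is co-hyperplanar if it lies in a common hyperplane. For a point $a$, an $a$-line is a pair of points $\{b,c\}$ such that $\{a,b,c\}$ is a line. A demicap with anchor point $a$ is a cap consisting of the $10$ points of five $a$-lines such that no four of these five $a$-lines are co-hyperplanar. For a set $S$ and a point $p\notin S$, $p$ completes a line with a pair of points of $S$ if there are distinct $x,y\in S$ with $\{p,x,y\}$ a line; the number of lines $p$ completes with $S$ is the number of such unordered pairs $\{x,y\}$. *)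

From HB Require Import structures.
From mathcomp Require Import all_boot all_order all_algebra.
Set Implicit Arguments. Unset Strict Implicit. Unset Printing Implicit Defensive.
Import GRing.Theory.
Local Open Scope ring_scope.

(* Points of AG(4,3) = F_3^4, as row vectors. *)
Definition point := 'rV['F_3]_4.

Definition is_line (L : {set point}) : bool :=
  (#|L| == 3)%N &&
  [exists x : point, exists y : point, exists z : point,
     (L == [set x; y; z]) && (x + y + z == 0)].

Definition is_cap (S : {set point}) : Prop :=
  forall L : {set point}, is_line L -> ~ (L \subset S).

Definition is_hyperplane (H : {set point}) : Prop :=
  exists (p : point) (V : 'M['F_3]_4),
    \rank V = 3%N /\ H = [set x : point | (x - p <= V)%MS].

Definition cohyperplanar (S : {set point}) : Prop :=
  exists H : {set point}, is_hyperplane H /\ S \subset H.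

Definition is_aline (a : point) (P : {set point}) : Prop :=
  exists b c : point, b != c /\ P = [set b; c] /\ is_line [set a; b; c].

Definition is_demicap (a : point) (D : {set point}) : Prop :=
  is_cap D /\
  exists S : {set {set point}},
    #|S| = 5%N /\ (forall P, P \in S -> is_aline a P) /\
    D = cover S /\ #|D| = 10%N /\
    (forall T : {set {set point}}, T \subset S -> #|T| = 4%N ->
       ~ cohyperplanar (cover T)).

Definition ncomplete (S : {set point}) (p : point) : nat :=
  #|[set P : {set point} | [&& P \subset S, #|P| == 2%N & is_line (p |: P)]]|.

From mathcomp Require Import all_boot all_order all_algebra.
Set Implicit Arguments.
Unset Strict Implicit. Unset Printing Implicit Defensive.
Import GRing.Theory.
Local Open Scope ring_scope.

(* Let S be the five a-lines of the demicap D, with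
   directions d_P (so P = {a + d_P, a - d_P}).  A point p completes a line with
   a pair {x, y} iff p = -(x + y), so ncomplete D p is the size of the fibre
   over p of the third-point map on the 45 pairs of D.
   1. Generic counting (section CompletionCount): if D is a cap, a is outside
      D, the pairs with third point a are exactly those of S, and the third
      point map is injective on the other pairs, then a completes #|S| lines,
      the images of the other 'C(#|D|,2) - #|S| pairs complete one line each,
      and every remaining point outside D completes none.
   2. Geometry of demicaps (section Demicap): non-cohyperplanarity of any four
      a-lines means any four directions d_P are linearly independent.  Writing
      the points of D as a + s d_P (s <> 0) and comparing coefficients, a pair
      {x, y} on two different a-lines has x + y <> -a, and x + y determines
      the pair.  These are the hypotheses of step 1, which with #|D| = 10,
      #|S| = 5 and #|AG(4,3)| = 81 yields the counts 5, 40 and 30. *)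

Lemma exists_avoiding (T : finType) (A : {set T}) (s : seq T) :
  (size s < #|A|)%N -> exists2 x, x \in A & x \notin s.
Proof.
move=> sA; apply/subsetPn; apply: contraTN sA => /subset_leq_card As.
by rewrite -leqNgt (leq_trans As (card_size s)).
Qed.

Lemma sub_hyperplane (F : fieldType) m n (M : 'M[F]_(m, n)) :
  (\rank M < n)%N -> exists2 V : 'M[F]_n, \rank V = n.-1 & (M <= V)%MS.
Proof.
move=> rankM; set C := cokermx M.
have C0 : C != 0 by rewrite -mxrank_eq0 mxrank_coker subn_eq0 -ltnNge.
have [j Cj] : exists j, col j C != 0.
  apply/existsP; apply: contraR C0 => /existsPn colC0; apply/eqP/matrixP => r k.
  by move/negPn/eqP/colP/(_ r): (colC0 k); rewrite !mxE.
exists (kermx (col j C)).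
  by rewrite mxrank_ker -mxrank_tr rank_rV trmx_eq0 Cj subn1.
by rewrite sub_kermx colE mulmxA mulmx_coker mul0mx.
Qed.

Lemma dependent_in_hyperplane (F : fieldType) n (I : finType) (T : {set I})
    (v : I -> 'rV[F]_n) (c : I -> F) :
  (#|T| <= n)%N -> \sum_(i in T) c i *: v i = 0 ->
  (exists2 i, i \in T & c i != 0) ->
  exists2 V : 'M[F]_n, \rank V = n.-1 & forall i, i \in T -> (v i <= V)%MS.
Proof.
move=> Tn rel [i0 Ti0 ci0].
pose M := \matrix_(k < #|T|) v (enum_val k).
pose u := \row_(k < #|T|) c (enum_val k).
have uM0 : u *m M = 0.
  rewrite mulmx_sum_row; under eq_bigr => k _ do rewrite rowK mxE.
  by rewrite -[RHS]rel (big_enum_val (A := T : {pred I})).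
have u0 : u != 0.
  apply/eqP => /rowP/(_ (enum_rank_in Ti0 i0)); rewrite !mxE enum_rankK_in //.
  exact/eqP.
have rankM : (\rank M < n)%N.
  apply: leq_trans Tn; rewrite ltn_neqAle rank_leq_row andbT.
  by apply: contra u0 => freeM; rewrite -(mulmx_free_eq0 _ freeM) uM0.
have [V rankV MV] := sub_hyperplane rankM.
exists V => // i Ti; apply: submx_trans MV.
have -> : v i = row (enum_rank_in Ti i) M by rewrite rowK enum_rankK_in.
exact: row_sub.
Qed.

Lemma triple_point (x : point) : x + x + x = 0.
Proof.
have three0 : (3%:R : 'F_3) = 0 by apply: val_inj.
by rewrite -[x + x]mulr2n addrC -mulrS -scaler_nat three0 scale0r.
Qed.

Lemma double_point (x : point) : x + x = - x.
Proof. by apply/eqP; rewrite -subr_eq0 opprK triple_point. Qed.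

Definition third (P : {set point}) : point := - \sum_(x in P) x.

Lemma sum_pair (x y : point) : x != y -> \sum_(u in [set x; y]) u = x + y.
Proof. by move=> xy; rewrite big_setU1 ?inE // big_set1. Qed.

Lemma third_pair (x y : point) : x != y -> third [set x; y] = - (x + y).
Proof. by move=> xy; rewrite /third sum_pair. Qed.

Lemma set3E (x y z : point) : [set x; y; z] = x |: [set y; z].
Proof. by apply/setP => u; rewrite !inE orbA. Qed.

Lemma card_set3 (x y z : point) :
  (#|[set x; y; z]| == 3%N) = [&& x != y, x != z & y != z].
Proof.
rewrite set3E cardsU1 cards2 !inE negb_or.
by case: (x == y); case: (x == z); case: (y == z).
Qed.

Lemma sum_triple (x y z : point) : [&& x != y, x != z & y != z] ->
  \sum_(u in [set x; y; z]) u = x + y + z.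
Proof.
case/and3P=> xy xz yz; rewrite set3E big_setU1 ?inE ?negb_or ?xy ?xz //=.
by rewrite sum_pair // addrA.
Qed.

Lemma line3E (x y z : point) :
  is_line [set x; y; z] = [&& x != y, x != z, y != z & x + y + z == 0].
Proof.
rewrite /is_line card_set3 -!andbA.
apply: andb_id2l => xy; apply: andb_id2l => xz; apply: andb_id2l => yz.
apply/existsP/idP => [|sum0]; last first.
  by exists x; apply/existsP; exists y; apply/existsP; exists z; rewrite eqxx.
case=> x' /existsP[y' /existsP[z' /andP[/eqP E sum0]]].
have distinct' : [&& x' != y', x' != z' & y' != z'].
  by rewrite -card_set3 -E card_set3 xy xz.
by rewrite -sum_triple ?xy ?xz // E sum_triple.
Qed.

(* A point p completes a line with two distinct points x, y iff
   p = -(x + y); the three points are then automatically distinct. *)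
Lemma line_pairE (p x y : point) :
  x != y -> is_line (p |: [set x; y]) = (third [set x; y] == p).
Proof.
move=> xy; rewrite -set3E line3E third_pair // [- _ == p]eq_sym -addr_eq0 addrA.
case: (eqVneq (p + x + y) 0) => [sum0|]; rewrite ?andbF // xy !andbT.
apply/andP; split.
  apply: contra_neq xy => px.
  by move/eqP: sum0; rewrite px double_point addrC subr_eq0 eq_sym => /eqP.
apply: contra_neq xy => py.
by move/eqP: sum0; rewrite py addrAC double_point addrC subr_eq0 => /eqP.
Qed.

Definition pairs (D : {set point}) : {set {set point}} :=
  [set P : {set point} | P \subset D & #|P| == 2%N].

Lemma pairsP (D : {set point}) (P : {set point}) :
  P \in pairs D -> exists x y, [/\ x != y, P = [set x; y], x \in D & y \in D].
Proof.
rewrite inE => /andP[PD /cards2P[x [y [xy defP]]]]; exists x, y; split=> //.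
  by apply: (subsetP PD); rewrite defP set21.
by apply: (subsetP PD); rewrite defP set22.
Qed.

Lemma ncompleteE (D : {set point}) (p : point) :
  ncomplete D p = #|[set P in pairs D | third P == p]|.
Proof.
apply: eq_card => P; rewrite !inE -andbA; apply: andb_id2l => _.
by apply: andb_id2l => /cards2P[x [y [xy ->]]]; exact: line_pairE.
Qed.

Lemma third_notin_cap (D : {set point}) (P : {set point}) :
  is_cap D -> P \in pairs D -> third P \notin D.
Proof.
move=> capD /pairsP[x [y [xy -> xD yD]]]; apply/negP => tD.
apply: (capD (third [set x; y] |: [set x; y])); first by rewrite line_pairE.
by apply/subsetP => u; rewrite !inE => /or3P[] /eqP ->.
Qed.

Section CompletionCount.

Variables (D : {set point}) (a : point) (S : {set {set point}}).
Hypotheses (capD : is_cap D) (aD : a \notin D) (S_pairs : S \subset pairs D).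
Hypothesis third_anchor : {in pairs D, forall P, (third P == a) = (P \in S)}.
Hypothesis third_inj : {in pairs D :\: S &, injective third}.

Let single_points := third @: (pairs D :\: S).

Lemma card_single_points : #|single_points| = ('C(#|D|, 2) - #|S|)%N.
Proof. by rewrite card_in_imset // cardsD (setIidPr S_pairs) cards_draws. Qed.

Lemma single_points_notin p : p \in single_points -> p \notin D.
Proof.
by case/imsetP => P; rewrite inE => /andP[_ PD] ->; exact: third_notin_cap.
Qed.

Lemma anchor_notin_single : a \notin single_points.
Proof.
apply/imsetP => -[P]; rewrite inE => /andP[PS PD] /esym/eqP.
by rewrite third_anchor // (negbTE PS).
Qed.

Lemma ncomplete_anchor : ncomplete D a = #|S|.
Proof.
rewrite ncompleteE; apply: eq_card => P; rewrite inE.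
case PD: (P \in pairs D); first exact: third_anchor.
by apply/esym/negbTE; apply: contraFN PD => PS; exact: (subsetP S_pairs).
Qed.

Lemma ncomplete_off_anchor p : p != a -> ncomplete D p = (p \in single_points).
Proof.
move=> pa; rewrite ncompleteE; case: (boolP (p \in single_points)) => [|p_new].
  case/imsetP=> P0 P0new ->; have /setDP[P0D P0S] := P0new.
  transitivity #|[set P0]|; last exact: cards1.
  apply: eq_card => P; rewrite in_set1 in_set.
  apply/andP/eqP => [[PD /eqP tP] | ->]; last by [].
  apply: third_inj => //; apply/setDP; split=> //.
  by rewrite -third_anchor // tP third_anchor.
apply/eqP; rewrite cards_eq0; apply/eqP/setP => P; rewrite in_set0 in_set.
apply/negbTE/andP => -[PD /eqP tP].
case PS: (P \in S); first by move: pa; rewrite -tP third_anchor ?PS.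
move: p_new; rewrite -tP; apply/negP/negPn/imsetP.
by exists P; rewrite // inE PS PD.
Qed.

Lemma completion_counts : (1 < #|S|)%N ->
  [/\ ncomplete D a = #|S|,
      #|[set p : point | (p \notin D) && (ncomplete D p == 1%N)]|
        = ('C(#|D|, 2) - #|S|)%N
    & #|[set p : point | (p \notin D) && (ncomplete D p == 0%N)]|
        = (#|point| - (#|D| + ('C(#|D|, 2) - #|S|)).+1)%N].
Proof.
move=> S_gt1.
have nc p : ncomplete D p = if p == a then #|S| else p \in single_points.
  case: (eqVneq p a) => [->|pa]; first exact: ncomplete_anchor.
  exact: ncomplete_off_anchor.
split; first exact: ncomplete_anchor.
  rewrite -card_single_points; apply: eq_card => p; rewrite !inE nc.
  case: ifP => [/eqP ->|_].
    by rewrite aD (negbTE anchor_notin_single) gtn_eqF.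
  by case: (boolP (p \in single_points)) => [/single_points_notin ->|];
    rewrite ?andbF.
have -> : [set p | (p \notin D) && (ncomplete D p == 0%N)]
          = ~: (D :|: (a |: single_points)).
  apply/setP => p; rewrite !inE nc negb_or; case: ifP => [/eqP ->|_] /=.
    by rewrite (gtn_eqF (ltnW S_gt1)) andbF.
  by case: (boolP (p \in single_points)) => [/single_points_notin ->|];
    rewrite ?andbF.
have disj : [disjoint D & a |: single_points].
  rewrite disjoint_sym disjoints_subset; apply/subsetP => p; rewrite !inE.
  by case/predU1P => [->|/single_points_notin].
rewrite -(cardsC (D :|: (a |: single_points))) cardsU (disjoint_setI0 disj).
rewrite cards0 subn0 cardsU1 anchor_notin_single card_single_points.
by rewrite addnS addKn.
Qed.

End CompletionCount.

Lemma alineP (a : point) (P : {set point}) :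
  is_aline a P -> exists2 v : point, v != 0 & P = [set a + v; a - v].
Proof.
case=> b [c [_ [-> line]]].
move: line; rewrite line3E => /and4P[ab _ _ /eqP sum0].
have cE : c = - a - b by apply/eqP; rewrite -opprD -addr_eq0 addrC sum0.
exists (b - a); first by rewrite subr_eq0 eq_sym.
by rewrite addrC subrK opprB addrA double_point cE.
Qed.

(* A chosen direction of an a-line (determined up to sign). *)
Definition aline_dir (a : point) (P : {set point}) : point :=
  odflt 0 [pick v | (v != 0) && (P == [set a + v; a - v])].

Lemma aline_dirP (a : point) (P : {set point}) : is_aline a P ->
  aline_dir a P != 0 /\ P = [set a + aline_dir a P; a - aline_dir a P].
Proof.
case/alineP=> v v0 defP; rewrite /aline_dir.
case: pickP => [w /andP[-> /eqP] //|].
by move/(_ v); rewrite v0 defP eqxx.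
Qed.

Lemma aline_pair_neq (a v : point) : v != 0 -> a + v != a - v.
Proof.
apply: contra_neq => /addrI /eqP.
by rewrite -subr_eq0 opprK double_point oppr_eq0 => /eqP.
Qed.

Lemma mem_aline (a v x : point) :
  x \in [set a + v; a - v] -> exists2 s : 'F_3, s != 0 & x = a + s *: v.
Proof.
rewrite !inE => /orP[] /eqP ->; [exists 1 | exists (-1)];
  by rewrite ?scale1r ?scaleN1r ?oppr_eq0 ?oner_eq0.
Qed.

Lemma third_aline (a v : point) : v != 0 -> third [set a + v; a - v] = a.
Proof.
move=> v0; rewrite third_pair ?aline_pair_neq //.
by rewrite addrACA subrr addr0 double_point opprK.
Qed.

Lemma sum_from_anchor (a u w : point) : (a + u) + (a + w) = - a + (u + w).
Proof. by rewrite addrACA double_point. Qed.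

Section Demicap.

Variables (a : point) (S : {set {set point}}).
Hypothesis S_alines : forall P, P \in S -> is_aline a P.
Hypothesis card_S : #|S| = 5%N.
Hypothesis S_noncoh :
  forall T : {set {set point}},
    T \subset S -> #|T| = 4%N -> ~ cohyperplanar (cover T).

Local Notation dir := (aline_dir a).

Lemma mem_cover x : x \in cover S ->
  exists P s, [/\ P \in S, x \in P, s != 0 & x = a + s *: dir P].
Proof.
case/bigcupP=> P PS xP; have [_ defP] := aline_dirP (S_alines PS).
by move: (xP); rewrite {1}defP => /mem_aline[s s0 xE]; exists P, s.
Qed.

Lemma anchor_notin_cover : a \notin cover S.
Proof.
apply/negP => /mem_cover[P [s [PS _ s0 /eqP]]].
have [d0 _] := aline_dirP (S_alines PS).
rewrite -subr_eq0 opprD addrA subrr add0r oppr_eq0 scaler_eq0.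
by rewrite (negbTE s0) (negbTE d0).
Qed.

Lemma alines_pairs : S \subset pairs (cover S).
Proof.
apply/subsetP => P PS; rewrite inE (bigcup_sup P PS) /=.
have [d0 ->] := aline_dirP (S_alines PS).
by rewrite cards2 aline_pair_neq.
Qed.

Lemma pair_in_aline P x y :
  P \in S -> x \in P -> y \in P -> x != y -> [set x; y] = P.
Proof.
move=> PS xP yP xy; apply/eqP; rewrite eqEcard; apply/andP; split.
  by apply/subsetP => u; rewrite !inE => /orP[] /eqP ->.
have := subsetP alines_pairs P PS; rewrite inE => /andP[_ /eqP ->].
by rewrite cards2 xy.
Qed.

(* Non-cohyperplanarity: any four of the five directions are linearly
   independent, i.e. a relation with a vanishing coefficient is trivial. *)
Lemma dir_independent (c : {set point} -> 'F_3) P0 :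
  P0 \in S -> c P0 = 0 -> \sum_(P in S) c P *: dir P = 0 ->
  forall P, P \in S -> c P = 0.
Proof.
move=> P0S cP0 rel P PS; apply/eqP/negPn/negP => cP.
have TS : S :\ P0 \subset S by exact: subD1set.
have cardT : #|S :\ P0| = 4%N.
  by move: (cardsD1 P0 S); rewrite P0S card_S add1n => -[<-].
have relT : \sum_(Q in S :\ P0) c Q *: dir Q = 0.
  by move: rel; rewrite (big_setD1 P0) //= cP0 scale0r add0r.
have PT : P \in S :\ P0.
  by rewrite !inE PS andbT; apply: contraNneq cP => ->; rewrite cP0.
have [V rankV TV] :=
  dependent_in_hyperplane (eq_leq cardT) relT (ex_intro2 _ _ P PT cP).
apply: (S_noncoh TS cardT); exists [set x | (x - a <= V)%MS].
split; first by exists a, V.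
apply/subsetP => x /bigcupP[Q QT xQ]; rewrite inE.
have [_ defQ] := aline_dirP (S_alines (subsetP TS Q QT)).
move: xQ; rewrite defQ => /mem_aline[s _ ->].
by rewrite addrC addKr scalemx_sub // TV.
Qed.

Lemma coord_eq P Q P' Q' R (s t s' t' : 'F_3) :
  P \in S -> Q \in S -> P' \in S -> Q' \in S -> R \in S ->
  s *: dir P + t *: dir Q = s' *: dir P' + t' *: dir Q' ->
  (P == R)%:R * s + (Q == R)%:R * t = (P' == R)%:R * s' + (Q' == R)%:R * t'.
Proof.
move=> PS QS P'S Q'S RS sumE.
pose c X := (P == X)%:R * s + (Q == X)%:R * t
            - ((P' == X)%:R * s' + (Q' == X)%:R * t').
have sum_indicator Y r : Y \in S ->
    \sum_(X in S) ((Y == X)%:R * r) *: dir X = r *: dir Y.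
  move=> YS; rewrite (big_setD1 Y) //= eqxx mul1r big1 ?addr0 // => X.
  by rewrite !inE => /andP[XY _]; rewrite eq_sym (negbTE XY) mul0r scale0r.
have sum_c : \sum_(X in S) c X *: dir X = 0.
  rewrite /c; under eq_bigr do rewrite scalerBl !scalerDl.
  by rewrite sumrB !big_split /= !sum_indicator // sumE subrr.
have [X0 X0S] : exists2 X0, X0 \in S & X0 \notin [:: P; Q; P'; Q'].
  by apply: exists_avoiding; rewrite card_S.
rewrite !inE !negb_or => /and4P[PX QX P'X Q'X].
have cX0 : c X0 = 0.
  rewrite /c (eq_sym P) (eq_sym Q) (eq_sym P') (eq_sym Q').
  rewrite (negbTE PX) (negbTE QX) (negbTE P'X) (negbTE Q'X).
  by rewrite !mul0r !addr0 subrr.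
apply/eqP; rewrite -subr_eq0; apply/eqP.
exact: dir_independent X0S cX0 sum_c R RS.
Qed.

Lemma third_anchor B : B \in pairs (cover S) -> (third B == a) = (B \in S).
Proof.
move=> BD; apply/eqP/idP => [|BS]; last first.
  by have [d0 ->] := aline_dirP (S_alines BS); rewrite third_aline.
case/pairsP: BD => x [y [xy -> xD yD]].
have [P [s [PS xP s0 xE]]] := mem_cover xD.
have [Q [t [QS yQ _ yE]]] := mem_cover yD.
have [PQe|PQ] := eqVneq P Q.
  by move=> _; rewrite (pair_in_aline PS xP _ xy) // PQe.
rewrite third_pair // xE yE sum_from_anchor opprD opprK => /eqP tE.
have rel : s *: dir P + t *: dir Q = 0 *: dir P + 0 *: dir Q.
  by apply/eqP; move: tE; rewrite !scale0r addr0 addrC -subr_eq0 addrK oppr_eq0.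
move: (coord_eq PS QS PS QS PS rel).
rewrite eqxx (eq_sym Q) (negbTE PQ) mul1r !mulr0 mul0r !addr0 => s_eq0.
by rewrite s_eq0 eqxx in s0.
Qed.

Lemma cross_pair_mem x y x' y' :
  x \in cover S -> y \in cover S -> x' \in cover S -> y' \in cover S ->
  x != y -> x' != y' -> [set x; y] \notin S -> [set x'; y'] \notin S ->
  x + y = x' + y' -> x \in [set x'; y'].
Proof.
move=> xD yD xD' yD' xy xy' xyS xyS'.
have [P [s [PS xP s0 xE]]] := mem_cover xD.
have [Q [t [QS yQ _ yE]]] := mem_cover yD.
have [P' [s' [PS' xP' _ xE']]] := mem_cover xD'.
have [Q' [t' [QS' yQ' _ yE']]] := mem_cover yD'.
have PQ : P != Q.
  by apply: contraNneq xyS => PQ; rewrite (pair_in_aline PS xP _ xy) // PQ.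
have PQ' : P' != Q'.
  apply: contraNneq xyS' => PQ'.
  by rewrite (pair_in_aline PS' xP' _ xy') // PQ'.
rewrite xE yE xE' yE' !sum_from_anchor => /addrI /(coord_eq PS QS PS' QS' PS).
rewrite eqxx (eq_sym Q) (negbTE PQ) mul1r mul0r addr0 !inE.
have [<-|P'P] := eqVneq P' P.
  by rewrite eq_sym (negbTE PQ') mul1r mul0r addr0 => ->; rewrite eqxx.
rewrite mul0r add0r; have [<-|Q'P] := eqVneq Q' P.
  by rewrite mul1r => ->; rewrite eqxx orbT.
by rewrite mul0r => /eqP; rewrite (negbTE s0).
Qed.

Lemma third_inj : {in pairs (cover S) :\: S &, injective third}.
Proof.
move=> P Q /setDP[PD PS] /setDP[QD QS].
case/pairsP: PD PS => x [y [xy -> xD yD]] PS.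
case/pairsP: QD QS => x' [y' [xy' -> xD' yD']] QS.
rewrite !third_pair // => /oppr_inj sumE.
apply/eqP; rewrite eqEcard !cards2 xy xy' andbT.
apply/subsetP => u /set2P[] ->.
  exact: (cross_pair_mem xD yD xD' yD' xy xy' PS QS sumE).
apply: (cross_pair_mem yD xD xD' yD') => //;
  by [rewrite eq_sym | rewrite setUC | rewrite addrC].
Qed.

End Demicap.

Theorem corollary3p5 (a : point) (D : {set point}) :
  is_demicap a D ->
  [/\ a \notin D,
      ncomplete D a = 5%N,
      #|[set p : point | (p \notin D) && (ncomplete D p == 1%N)]| = 40%N
    & #|[set p : point | (p \notin D) && (ncomplete D p == 0%N)]| = 30%N].
Proof.
case=> capD [S [card_S [S_alines [defD [card_D S_noncoh]]]]]; subst D.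
have aD := anchor_notin_cover S_alines.
have S_gt1 : (1 < #|S|)%N by rewrite card_S.
have [nc_a n1 n0] := completion_counts capD aD (alines_pairs S_alines)
  (third_anchor S_alines card_S S_noncoh)
  (third_inj S_alines card_S S_noncoh) S_gt1.
have card_point : #|point| = 81%N by rewrite card_mx card_Fp.
by split; rewrite // ?nc_a ?n1 ?n0 card_S ?card_D ?card_point.
Qed.
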